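(* For every $n\in\mathbb{N}$, $$a_{n,-n}=\frac{n\,a_{1,-1}^{\,n}}{6^{n-1}},\qquad a_{n,n}=\frac{n\,a_{1,1}^{\,n}}{6^{n-1}}.$$ Equivalently, $\sum_{n\ge0}\Theta^na_{n,-n}x^n=1+\dfrac{b_{1,-1}x}{(1-b_{1,-1}x/6)^2}$ with $b_{1,-1}=\Theta a_{1,-1}$.
   Context: Let $\varepsilon\in\{\pm1\}$, $b\in\mathbb{R}\setminus\{0\}$, $a\in\mathbb{C}$, and consider the degenerate third Painlevé equation $u''=\frac{(u')^2}{u}-\frac{u'}{\tau}+\frac1\tau(-8\varepsilon u^2+2ab)+\frac{b^2}{u}$. Put $\theta(\tau)=3^{3/2}(\varepsilon b)^{1/3}\tau^{2/3}$, $\Theta=3^{3/4}(\varepsilon b)^{1/6}$ (so $\theta=\Theta^2\tau^{2/3}$) and $\alpha=2i\sqrt3\,a$. Let $\varkappa\in\mathbb{C}$ with $|\mathrm{Re}\,\varkappa|<1/2$ and $w=\tau^{2\varkappa/3}e^{i\theta(\tau)}$. Consider the (general-solution) asymptotic expansion $$u(\tau)=\frac{\varepsilon(\varepsilon b)^{2/3}}{2}\tau^{1/3}\Big(1+\sum_{k=1}^{\infty}\tau^{-k/3}\sum_{j=-k}^{k}a_{k,j}w^j\Big),\qquad \mathrm{Re}\,\tau\to+\infty,\ |\mathrm{Im}\,\theta(\tau)|<\delta,$$ where $a_{1,0}=0$, $a_{1,1}a_{1,-1}=-\dfrac{i\varkappa}{\sqrt3(\varepsilon b)^{1/3}}$ (equivalently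 $\Theta^2a_{1,1}a_{1,-1}=-3i\varkappa$), and all remaining coefficients $a_{k,j}$ are uniquely determined by $a_{1,1},a_{1,-1},a,b,\varepsilon$ via formal substitution of the expansion into the equation; set $a_{0,0}=1$. *)

From mathcomp Require Import all_boot all_algebra.
From mathcomp Require Import reals.
From mathcomp.real_closed Require Import complex.
Set Implicit Arguments.
Unset Strict Implicit.
Unset Printing Implicit Defensive.
Import GRing.Theory Num.Theory.
Local Open Scope ring_scope.

(* A formal term [(m, f)] with [m : int], [f : nat -> int -> C] stands for  *)
(*     tau^(m/3) * \sum_(k >= 0) \sum_(-k <= j <= k) f k j tau^(-k/3) w^j   *)
(* where  w = tau^(2 kappa/3) e^(i theta(tau)),  theta = Theta^2 tau^(2/3). *)
(* Only the values f k j with |j| <= k are meaningful (this is the shape of *)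
(* the expansion in the paper; it is preserved by all operations below).    *)

Section FormalSeries.
Variable R : realType.
Local Notation C := (R[i]).

Definition coefs := nat -> int -> C.
Definition fterm := (int * coefs)%type.

Definition RtoC (x : R) : C := Complex x 0.

Definition cadd (f g : coefs) : coefs := fun k j => f k j + g k j.

(* multiplication by tau^(-n/3) *)
Definition czshift (n : nat) (f : coefs) : coefs :=
  fun k j => if (n <= k)%N then f (k - n)%N j else 0.

(* Cauchy product in (tau^(-1/3), w), using |j1| <= k1 for the left factor *)
Definition cmul (f g : coefs) : coefs := fun k j =>
  \sum_(k1 < k.+1) \sum_(i < (2 * k1).+1)
     f k1 (i%:Z - k1%:Z) * g (k - k1)%N (j - (i%:Z - k1%:Z)).

Definition tconst (x : C) : fterm :=
  (0%Z, fun k j => if (k == 0%N) && (j == 0%Z) then x else 0).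
Definition ttau : fterm :=
  (3%Z, fun k j => if (k == 0%N) && (j == 0%Z) then 1 else 0).

Definition tadd (u v : fterm) : fterm :=
  let M := Num.max u.1 v.1 in
  (M, cadd (czshift `|M - u.1|%N u.2) (czshift `|M - v.1|%N v.2)).

Definition tmul (u v : fterm) : fterm := (u.1 + v.1, cmul u.2 v.2).

Definition tscale (x : C) (u : fterm) : fterm := tmul (tconst x) u.

(* d/dtau, computed termwise:
   d/dtau (tau^((m-k)/3) w^j)
     = ((m-k)/3 + 2 j kappa/3) tau^((m-k-3)/3) w^j
       + i j (2/3) Theta^2 tau^((m-k-1)/3) w^j,
   since w'/w = 2 kappa/(3 tau) + i theta'(tau), theta' = (2/3) Theta^2 tau^(-1/3). *)
Definition tderiv (Theta kappa : C) (u : fterm) : fterm :=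
  let m := u.1 in let f := u.2 in
  (m - 1, fun k j =>
     2%:R * 'i / 3%:R * Theta ^+ 2 * j%:~R * f k j
     + (if (2 <= k)%N then
          ((m - k%:Z + 2)%:~R / 3%:R + 2%:R * j%:~R * kappa / 3%:R)
            * f (k - 2)%N j
        else 0)).

Definition tzero (u : fterm) : Prop := forall k j, u.2 k j = 0.

End FormalSeries.

Section DP3.
Variable R : realType.
Local Notation C := (R[i]).

Definition Theta (eps b : R) : C :=
  4.-root (27%:R : C) * 6.-root (RtoC (eps * b)).

Definition uprefactor (eps b : R) : C :=
  RtoC eps * (6.-root (RtoC (eps * b))) ^+ 4 / 2%:R.

(* coefficient of tau^(-k/3) w^j in 1 + \sum_k tau^(-k/3) \sum_(-k..k) a_kj w^j *)
Definition ucoef (a : nat -> int -> C) : coefs R := fun k j =>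
  if k == 0%N then (if j == 0%Z then 1 else 0)
  else if (`|j| <= k)%N then a k j else 0.

(* the formal series u = eps (eps b)^(2/3)/2 * tau^(1/3) (1 + ...) *)
Definition userie (eps b : R) (a : nat -> int -> C) : fterm R :=
  (1%Z, fun k j => uprefactor eps b * ucoef a k j).

(* The equation
     u'' = (u')^2/u - u'/tau + (1/tau)(-8 eps u^2 + 2 a b) + b^2/u
   multiplied by u*tau, i.e.
     tau u u'' - tau (u')^2 + u u' + 8 eps u^3 - 2 a b u - b^2 tau = 0. *)
Definition dP3_formal (eps b : R) (acst kappa : C) (u : fterm R) : fterm R :=
  let D := tderiv (Theta eps b) kappa in
  let u1 := D u in let u2 := D u1 in
  tadd (tmul (ttau R) (tmul u u2))
  (tadd (tscale (-1) (tmul (ttau R) (tmul u1 u1)))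
  (tadd (tmul u u1)
  (tadd (tscale (8%:R * RtoC eps) (tmul u (tmul u u)))
  (tadd (tscale (- (2%:R * acst * RtoC b)) u)
        (tscale (- RtoC (b ^+ 2)) (ttau R)))))).

End DP3.

From mathcomp Require Import all_boot all_order all_algebra.
From mathcomp Require Import reals.
From mathcomp.real_closed Require Import complex.
From mathcomp Require Import zify ring.
Set Implicit Arguments.
Unset Strict Implicit.
Unset Printing Implicit Defensive.
Import Order.TTheory GRing.Theory Num.Theory.
Local Open Scope ring_scope.

(* Since [a_(k,j) = 0] for [|j| > k], the extreme diagonals [j = k] and [j = -k] of
   the substituted equation involve only the diagonal coefficients of [u]: products
   become Cauchy products of diagonals, differentiation acts on them only through
   [e^(i theta)], and the terms [u u'] and [a b u] are of lower order in [tau].  With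
   [V(x) = \sum_k a_(k,+-k) x^k] and the Euler operator [D = x d/dx] the diagonal reads
   [3 (V D^2 V - (D V)^2) = V^3 - 1].  Its coefficient of [x^n] is
   [3 (n^2 - 1) a_n + (terms in a_k, k < n)], so [V] is determined by [a_1], and
   [V = 1 + 6 w x / (1 - w x)^2] with [w = a_1 / 6] is a solution. *)

Lemma double_sum_ord m : (2 * \sum_(j < m.+1) j = m * m.+1)%N.
Proof.
elim: m => [|m IH]; first by rewrite big_ord_recr big_ord0.
by rewrite big_ord_recr /= mulnDr IH; lia.
Qed.

Lemma sum_ord_mul_subn m : (6 * \sum_(j < m.+1) j * (m - j) + m = m ^ 3)%N.
Proof.
elim: m => [|m IH]; first by rewrite big_ord_recr big_ord0.
rewrite big_ord_recr /= subnn muln0 addn0.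
have -> : (\sum_(j < m.+1) j * (m.+1 - j)
           = \sum_(j < m.+1) j * (m - j) + \sum_(j < m.+1) j)%N.
  by rewrite -big_split /=; apply: eq_bigr => j _; have := ltn_ord j; nia.
by have := double_sum_ord m; nia.
Qed.

Section EulerOperator.
Variable C : comNzRingType.
Implicit Types p q V W : {poly C}.

Definition euler p : {poly C} := locked ('X * p^`()).

Lemma coef_euler p k : (euler p)`_k = k%:R * p`_k.
Proof.
by rewrite /euler -lock coefXM; case: k => [|k] /=; rewrite ?mul0r // coef_deriv mulr_natl.
Qed.

Lemma eulerD p q : euler (p + q) = euler p + euler q.
Proof. by rewrite /euler -!lock derivD mulrDr. Qed.

Lemma eulerB p q : euler (p - q) = euler p - euler q.
Proof. by rewrite /euler -!lock derivB mulrBr. Qed.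

Lemma eulerM p q : euler (p * q) = euler p * q + p * euler q.
Proof. by rewrite /euler -!lock derivM; ring. Qed.

Lemma eulerMn p n : euler (p *+ n) = euler p *+ n.
Proof. by rewrite /euler -!lock derivMn mulrnAr. Qed.

Lemma eulerC c : euler c%:P = 0.
Proof. by rewrite /euler -lock derivC mulr0. Qed.

Lemma euler1 : euler 1 = 0.
Proof. by rewrite -polyC1 eulerC. Qed.

Lemma eulerCM c p : euler (c%:P * p) = c%:P * euler p.
Proof. by rewrite eulerM eulerC mul0r add0r. Qed.

Lemma eulerXn n : euler 'X^n = n%:R%:P * 'X^n.
Proof.
rewrite /euler -lock derivXn; case: n => [|n]; first by rewrite !mul0r mulr0n mulr0.
by rewrite mulrnAr -exprS polyC_natr mulr_natl.
Qed.

Definition diag_eqn V := (V * euler (euler V) - euler V * euler V) *+ 3 - V * V * V + 1.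

Definition vanishes_below N p := forall n, (n < N)%N -> p`_n = 0.

Lemma vanishes_belowMl N p q : vanishes_below N p -> vanishes_below N (q * p).
Proof.
move=> p0 n ltnN; rewrite coefM big1 // => j _.
by rewrite p0 ?mulr0 //; have := ltn_ord j; lia.
Qed.

(* The new coefficient enters linearly, with [3 n^2] from [V * euler (euler V)] and
   [-3] from [V^3]; [euler V ^+ 2] does not see it since [(euler W)`_0 = 0]. *)
Lemma coef_diag_eqn_addXn W n (c : C) : (0 < n)%N -> W`_0 = 1 ->
  (diag_eqn (W + c%:P * 'X^n))`_n = (diag_eqn W)`_n + c * ((n%:R ^+ 2 - 1) *+ 3).
Proof.
move=> n_gt0 W0; set Z := c%:P * 'X^n; pose m : {poly C} := (n%:R)%:P.
have eulerZ : euler Z = m * Z by rewrite /Z /m eulerCM eulerXn; ring.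
have coefZ Y : (Z * Y)`_n = c * Y`_0.
  by rewrite /Z -mulrA coefCM coefXnM ltnn subnn.
have coefZZ Y : (Z * Z * Y)`_n = 0.
  have -> : Z * Z * Y = c%:P * c%:P * Y * ('X^n * 'X^n) by rewrite /Z; ring.
  by rewrite -exprD coefMXn ifT //; lia.
have -> : diag_eqn (W + Z) = diag_eqn W
    + Z * ((W * m * m + euler (euler W) - euler W * m *+ 2 - W * W) *+ 3)
    - Z * Z * (W *+ 3 + Z).
  by rewrite /diag_eqn !eulerD eulerZ eulerM eulerZ eulerC; ring.
rewrite coefB coefD coefZ coefZZ subr0; congr (_ + _ * _).
by rewrite coefMn !coefB coefD coefMn !coef0M !coef_euler !coefC W0 /=; ring.
Qed.

(* Coefficients of [1 + 6 w x / (1 - w x)^2]. *)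
Definition diag_sol (w : C) k := if k == 0%N then 1 else (k%:R * w ^+ k) *+ 6.

Lemma poly_diag_sol N w : (0 < N)%N ->
  \poly_(i < N) diag_sol w i = 1 + (\poly_(i < N) (i%:R * w ^+ i)) *+ 6.
Proof.
move=> N_gt0; apply/polyP => i.
rewrite coef_poly coefD coefMn coef1 coef_poly /diag_sol.
case: i => [|i] /=; first by rewrite N_gt0 mul0r mul0rn addr0.
by case: ifP; rewrite ?add0r ?mul0rn.
Qed.

(* Coefficientwise this is [n^3 = n + 6 \sum_(j <= n) j (n - j)]. *)
Lemma euler2_poly_geometric N w (G := \poly_(i < N) (i%:R * w ^+ i)) :
  vanishes_below N (euler (euler G) - (G + (G * G) *+ 6)).
Proof.
move=> m ltmN; rewrite coefB !coef_euler coefD coefMn coefM.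
have -> : \sum_(j < m.+1) G`_j * G`_(m - j) = (\sum_(j < m.+1) j * (m - j))%:R * w ^+ m.
  rewrite natr_sum mulr_suml; apply: eq_bigr => j _; have ltjm := ltn_ord j.
  rewrite /G !coef_poly !ifT; try lia.
  have -> : w ^+ m = w ^+ j * w ^+ (m - j) by rewrite -exprD subnKC //; lia.
  by rewrite natrM; ring.
rewrite /G coef_poly ltmN.
have := congr1 (fun x => x%:R : C) (sum_ord_mul_subn m); rewrite /= natrD natrM natrX.
move=> sum_id; apply/eqP; rewrite subr_eq0; apply/eqP.
by transitivity ((m%:R : C) ^+ 3 * w ^+ m); [ring | rewrite -sum_id; ring].
Qed.

End EulerOperator.

Section DiagEqnSolutions.
Variable C : numDomainType.
Implicit Types A B : nat -> C.

Lemma poly_ord_recr A n : \poly_(i < n.+1) A i = \poly_(i < n) A i + (A n)%:P * 'X^n.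
Proof. by rewrite !poly_def big_ord_recr /= mul_polyC. Qed.

(* Since [3 (n^2 - 1) != 0] for [n >= 2], the degree [n] coefficient of
   [diag_eqn] determines that of its argument. *)
Lemma diag_eqn_coef_unique A B n : (1 < n)%N ->
  (forall k, (k < n)%N -> A k = B k) -> A 0%N = 1 ->
  (diag_eqn (\poly_(i < n.+1) A i))`_n = 0 -> (diag_eqn (\poly_(i < n.+1) B i))`_n = 0 ->
  A n = B n.
Proof.
move=> lt1n eqAB A0; rewrite !poly_ord_recr.
have -> : \poly_(i < n) B i = \poly_(i < n) A i by apply: eq_poly => i lt_in; rewrite eqAB.
have W0 : (\poly_(i < n) A i)`_0 = 1 by rewrite coef_poly ifT //; lia.
rewrite !coef_diag_eqn_addXn //; try lia.
have k_neq0 : (n%:R ^+ 2 - 1) *+ 3 != 0 :> C.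
  rewrite -mulr_natr mulf_neq0 ?pnatr_eq0 // subr_eq0 -natrX pnatr_eq1.
  by apply/eqP; nia.
move=> eqA eqB; apply: (mulIf k_neq0).
by apply: (addrI (diag_eqn (\poly_(i < n) A i))`_n); rewrite eqA eqB.
Qed.

Lemma diag_eqn_solution_unique A B :
  A 0%N = 1 -> B 0%N = 1 -> A 1%N = B 1%N ->
  (forall N, vanishes_below N (diag_eqn (\poly_(i < N) A i))) ->
  (forall N, vanishes_below N (diag_eqn (\poly_(i < N) B i))) ->
  A =1 B.
Proof.
move=> A0 B0 A1 solA solB n; elim: n {-2}n (leqnn n) => [|n IH] k le_kn.
  have -> : k = 0%N by lia.
  by rewrite A0 B0.
case: (ltnP k n.+1) => [lt_kn|le_nk]; first exact: IH.
have -> : k = n.+1 by lia.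
case: n IH {le_kn le_nk} => [|n] IH; first exact: A1.
by apply: diag_eqn_coef_unique => //; [apply: solA | apply: solB].
Qed.

Lemma diag_eqn_diag_sol N (w : C) : vanishes_below N (diag_eqn (\poly_(i < N) diag_sol w i)).
Proof.
case: N => [//|N]; rewrite poly_diag_sol //.
set G := \poly_(i < N.+1) _; set V := 1 + G *+ 6.
have eulerV : euler V = euler G *+ 6 by rewrite /V eulerD euler1 eulerMn add0r.
set E := euler (euler V) - V * V + V.
have E0 : vanishes_below N.+1 E.
  move=> m lt_mN; have -> : E = (euler (euler G) - (G + (G * G) *+ 6)) *+ 6.
    by rewrite /E eulerV eulerMn /V; ring.
  by rewrite coefMn euler2_poly_geometric // mul0rn.
(* [H] is a first integral of [E = 0]: [euler H = 6 euler V * E]. *)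
set H := (euler V * euler V) *+ 3 - ((V * V * V) *+ 2 - (V * V) *+ 3 + 1).
have H0 : vanishes_below N.+1 H.
  case=> [_|m lt_mN].
    have V0 : V`_0 = 1 by rewrite /V coefD coef1 coefMn coef_poly mul0r mul0rn addr0.
    by rewrite /H !(coefB, coefD, coefMn) !coef0M !coef_euler !mul0r coef1 V0 /=; ring.
  have := vanishes_belowMl (euler V *+ 6) E0 lt_mN.
  have -> : euler V *+ 6 * E = euler H.
    by rewrite /H /E !(eulerB, eulerD, eulerMn, eulerM, euler1); ring.
  by rewrite coef_euler => /eqP; rewrite mulf_eq0 pnatr_eq0 => /eqP.
have -> : diag_eqn V = (V *+ 3) * E - H by rewrite /diag_eqn /E /H; ring.
by move=> m lt_mN; rewrite coefB (vanishes_belowMl _ E0) // H0 // subr0.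
Qed.

End DiagEqnSolutions.

Section FormalDiagonals.
Variable R : realType.
Local Notation C := (R[i]).
Implicit Types (f g : coefs R) (u v : fterm R) (p q : {poly C}).

Definition subdiag f := forall k j, (k < `|j|)%N -> f k j = 0.

Definition diag_index (s : bool) k : int := if s then k%:Z else - k%:Z.

Definition diag_sign (s : bool) : C := if s then 1 else -1.

Definition diag_eqp N s f p := forall k, (k < N)%N -> f k (diag_index s k) = p`_k.

Lemma abs_diag_index s k : `|diag_index s k|%N = k.
Proof. by case: s; rewrite /diag_index ?abszN. Qed.

Lemma subdiag_cadd f g : subdiag f -> subdiag g -> subdiag (cadd f g).
Proof. by move=> fs gs k j lt_kj; rewrite /cadd fs ?gs ?addr0. Qed.

Lemma diag_eqp_cadd N s f g p q :
  diag_eqp N s f p -> diag_eqp N s g q -> diag_eqp N s (cadd f g) (p + q).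
Proof. by move=> fp gq k lt_kN; rewrite coefD -fp -?gq. Qed.

Lemma subdiag_cmul f g : subdiag g -> subdiag (cmul f g).
Proof.
move=> gs k j lt_kj; rewrite /cmul big1 // => k1 _; rewrite big1 // => i _.
by rewrite gs ?mulr0 //; have := ltn_ord k1; have := ltn_ord i; lia.
Qed.

Lemma subdiag_tmul u v : subdiag v.2 -> subdiag (tmul u v).2.
Proof. exact: subdiag_cmul. Qed.

Lemma diag_cmul s f g k : subdiag g ->
  cmul f g k (diag_index s k)
  = \sum_(k1 < k.+1) f k1 (diag_index s k1) * g (k - k1)%N (diag_index s (k - k1)).
Proof.
move=> gs; rewrite /cmul; apply: eq_bigr => k1 _; have lt_k1k := ltn_ord k1.
case: s; rewrite /diag_index.
- rewrite big_ord_recr /= big1 ?add0r; first by congr (f _ _ * g _ _); lia.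
  by move=> i _; rewrite gs ?mulr0 //; have := ltn_ord i; lia.
- rewrite big_ord_recl /= big1 ?addr0; first by congr (f _ _ * g _ _); lia.
  by move=> i _; rewrite gs ?mulr0 // /bump /=; have := ltn_ord i; lia.
Qed.

Lemma diag_eqp_cmul N s f g p q : subdiag g ->
  diag_eqp N s f p -> diag_eqp N s g q -> diag_eqp N s (cmul f g) (p * q).
Proof.
move=> gs fp gq k lt_kN; rewrite diag_cmul // coefM; apply: eq_bigr => i _.
by have := ltn_ord i => lt_ik; rewrite fp ?gq //; lia.
Qed.

Lemma subdiag_czshift n f : subdiag f -> subdiag (czshift n f).
Proof. by move=> fs k j lt_kj; rewrite /czshift; case: ifP => // _; apply: fs; lia. Qed.

Lemma diag_eqp_czshift0 N s f p : diag_eqp N s f p -> diag_eqp N s (czshift 0 f) p.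
Proof. by move=> fp k lt_kN; rewrite -fp // /czshift /= subn0. Qed.

(* A positive shift in the power of [tau^(-1/3)] pushes the support strictly
   inside the cone [|j| <= k], hence off the diagonals. *)
Lemma diag_eqp_czshiftS N s n f : subdiag f -> diag_eqp N s (czshift n.+1 f) 0.
Proof.
move=> fs k lt_kN; rewrite coef0 /czshift; case: ifP => // le_nk.
by apply: fs; rewrite abs_diag_index; lia.
Qed.

Lemma diag_eqp_tadd N s u v p q : u.1 = v.1 ->
  diag_eqp N s u.2 p -> diag_eqp N s v.2 q -> diag_eqp N s (tadd u v).2 (p + q).
Proof.
move=> eq_uv up vq; rewrite /tadd /= eq_uv maxxx subrr /=.
by apply: diag_eqp_cadd; apply: diag_eqp_czshift0.
Qed.

Lemma diag_eqp_tadd_lt N s u v q : (u.1 < v.1)%R -> subdiag u.2 ->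
  diag_eqp N s v.2 q -> diag_eqp N s (tadd u v).2 q.
Proof.
move=> lt_uv us vq; rewrite /tadd /=.
have -> : Num.max u.1 v.1 = v.1 by apply/max_idPr; apply: ltW.
rewrite subrr -[q]add0r; apply: diag_eqp_cadd; last exact: diag_eqp_czshift0.
case shift : `|v.1 - u.1|%N => [|n]; first by move: shift lt_uv; lia.
exact: diag_eqp_czshiftS.
Qed.

Lemma diag_eqp_tconst N s (x : C) : diag_eqp N s (tconst x).2 x%:P.
Proof. by move=> k _; rewrite coefC /=; case: k => [|k]; case: s. Qed.

Lemma subdiag_ttau : subdiag (ttau R).2.
Proof. by move=> k j lt_kj /=; case: ifP => // /andP[/eqP k0 /eqP j0]; lia. Qed.

Lemma diag_eqp_ttau N s : diag_eqp N s (ttau R).2 1.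
Proof. by move=> k _; rewrite coef1 /=; case: k => [|k]; case: s. Qed.

Lemma subdiag_tderiv Th ka u : subdiag u.2 -> subdiag (tderiv Th ka u).2.
Proof.
move=> us k j lt_kj /=; rewrite us ?mulr0 ?add0r //; case: ifP => // _.
by rewrite us ?mulr0 //; lia.
Qed.

Definition diag_dcoef eps b s : C := 2%:R * 'i / 3%:R * Theta eps b ^+ 2 * diag_sign s.

(* On the diagonals only the oscillating factor [e^(i theta)] is differentiated;
   in the variable [x = tau^(-1/3) w^(+-1)] this is the Euler operator. *)
Lemma diag_eqp_tderiv N s eps b ka u p : subdiag u.2 -> diag_eqp N s u.2 p ->
  diag_eqp N s (tderiv (Theta eps b) ka u).2 ((diag_dcoef eps b s)%:P * euler p).
Proof.
move=> us up k lt_kN; rewrite /= [X in _ + X](_ : _ = 0); last first.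
  by case: ifP => // le2k; rewrite us ?mulr0 // abs_diag_index; lia.
rewrite addr0 coefCM coef_euler -up // /diag_dcoef.
by case: s {up}; rewrite /diag_index /diag_sign ?mulrNz /=; ring.
Qed.

Definition diag_coefs s (a : nat -> int -> C) k := ucoef a k (diag_index s k).

Lemma subdiag_userie eps b a : subdiag (userie eps b a).2.
Proof.
move=> k j lt_kj /=; rewrite /ucoef; case: ifP => [/eqP k0|_].
  by case: ifP => [/eqP j0|_]; rewrite ?mulr0 //; move: lt_kj; rewrite j0 k0.
by rewrite leqNgt lt_kj /= mulr0.
Qed.

Lemma diag_eqp_userie N s eps b a :
  diag_eqp N s (userie eps b a).2 ((uprefactor eps b)%:P * \poly_(i < N) diag_coefs s a i).
Proof. by move=> k lt_kN; rewrite coefCM coef_poly lt_kN. Qed.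

(* The terms [u u'] and [-2 a b u] carry the lower power [tau^(1/3)] and drop out. *)
Lemma diag_eqp_dP3 N s eps b acst kappa u p : u.1 = 1%Z ->
  subdiag u.2 -> diag_eqp N s u.2 p ->
  let c := (diag_dcoef eps b s)%:P in
  diag_eqp N s (dP3_formal eps b acst kappa u).2
    (p * (c * euler (c * euler p)) - (c * euler p) * (c * euler p)
     + (8%:R * RtoC eps)%:P * (p * p * p) - (RtoC (b ^+ 2))%:P).
Proof.
case: u => m f m1 us up c; rewrite /= in m1 us up; subst m; set u := (1%Z, f).
set D := tderiv (Theta eps b) kappa.
have s1 : subdiag (D u).2 by apply: subdiag_tderiv.
have e1 : diag_eqp N s (D u).2 (c * euler p) by apply: diag_eqp_tderiv.
have s2 : subdiag (D (D u)).2 by apply: subdiag_tderiv.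
have e2 : diag_eqp N s (D (D u)).2 (c * euler (c * euler p)) by apply: diag_eqp_tderiv.
have -> : p * (c * euler (c * euler p)) - (c * euler p) * (c * euler p)
     + (8%:R * RtoC eps)%:P * (p * p * p) - (RtoC (b ^+ 2))%:P
   = 1 * (p * (c * euler (c * euler p)))
     + ((-1)%:P * (1 * ((c * euler p) * (c * euler p)))
     + ((8%:R * RtoC eps)%:P * (p * (p * p)) + (- RtoC (b ^+ 2))%:P * 1)).
  by rewrite !polyCN polyC1; ring.
rewrite /dP3_formal -/D.
apply: diag_eqp_tadd => //.
  apply: diag_eqp_cmul; [by repeat apply: subdiag_tmul | exact: diag_eqp_ttau |].
  exact: diag_eqp_cmul.
apply: diag_eqp_tadd => //.
  apply: diag_eqp_cmul; [by repeat apply: subdiag_tmul | exact: diag_eqp_tconst |].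
  apply: diag_eqp_cmul; [by repeat apply: subdiag_tmul | exact: diag_eqp_ttau |].
  exact: diag_eqp_cmul.
apply: diag_eqp_tadd_lt => //; first exact: subdiag_tmul.
apply: diag_eqp_tadd => //.
  apply: diag_eqp_cmul; [by repeat apply: subdiag_tmul | exact: diag_eqp_tconst |].
  by apply: diag_eqp_cmul; [by repeat apply: subdiag_tmul | done | exact: diag_eqp_cmul].
apply: diag_eqp_tadd_lt => //; first exact: subdiag_tmul.
by apply: diag_eqp_cmul; [exact: subdiag_ttau | exact: diag_eqp_tconst | exact: diag_eqp_ttau].
Qed.

End FormalDiagonals.

Section DiagNormalization.
Variable R : realType.
Variables eps b : R.
Hypothesis eps_pm1 : eps = 1 \/ eps = -1.

Lemma RtoC_eps_sqr : RtoC eps ^+ 2 = 1.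
Proof.
rewrite -[RtoC _]/(real_complex _ _) -rmorphXn.
by case: eps_pm1 => ->; rewrite ?sqrrN expr1n.
Qed.

Lemma root6_eps_b_pow12 : 6.-root (RtoC (eps * b)) ^+ 12 = RtoC (b ^+ 2).
Proof.
rewrite (_ : 12 = 6 * 2)%N // exprM rootCK // -[RtoC _]/(real_complex _ _) -rmorphXn.
by rewrite exprMn; case: eps_pm1 => ->; rewrite ?sqrrN expr1n mul1r.
Qed.

Lemma uprefactor_cube :
  8%:R * RtoC eps * (uprefactor eps b * uprefactor eps b * uprefactor eps b) = RtoC (b ^+ 2).
Proof.
rewrite -root6_eps_b_pow12 /uprefactor.
transitivity ((RtoC eps ^+ 2) ^+ 2 * 6.-root (RtoC (eps * b)) ^+ 12); first by field.
by rewrite RtoC_eps_sqr expr1n mul1r.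
Qed.

Lemma diag_dcoef_uprefactor s :
  diag_dcoef eps b s * diag_dcoef eps b s * (uprefactor eps b * uprefactor eps b)
  = - (RtoC (b ^+ 2) *+ 3).
Proof.
rewrite -root6_eps_b_pow12 /diag_dcoef /uprefactor /Theta.
set r := 6.-root _; set q := 4.-root _.
have q4 : q ^+ 4 = 27%:R by rewrite rootCK.
have sign2 : diag_sign R s ^+ 2 = 1 by case: s; rewrite /diag_sign ?sqrrN expr1n.
transitivity ('i ^+ 2 * diag_sign R s ^+ 2 * RtoC eps ^+ 2 * q ^+ 4 * r ^+ 12 / 9%:R).
  by field.
by rewrite sqrCi sign2 RtoC_eps_sqr q4; field.
Qed.

End DiagNormalization.

(* Up to the nonzero factor [- b^2], the diagonal of the equation is [diag_eqn]. *)
Lemma diag_eqn_userie (R : realType) (eps b : R) acst kappa a s N :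
  (eps = 1 \/ eps = -1) -> b != 0 ->
  tzero (dP3_formal eps b acst kappa (userie eps b a)) ->
  vanishes_below N (diag_eqn (\poly_(i < N) diag_coefs s a i)).
Proof.
move=> eps_pm1 b_neq0 eq0 k lt_kN.
have := @diag_eqp_dP3 R N s eps b acst kappa (userie eps b a) _ erefl (subdiag_userie eps b a)
  (@diag_eqp_userie R N s eps b a) k lt_kN.
rewrite eq0 !eulerCM.
set X := \poly_(i < N) _; set P := uprefactor eps b; set c := diag_dcoef eps b s.
have -> : P%:P * X * (c%:P * (c%:P * (P%:P * euler (euler X))))
    - c%:P * (P%:P * euler X) * (c%:P * (P%:P * euler X))
    + (8%:R * RtoC eps)%:P * (P%:P * X * (P%:P * X) * (P%:P * X)) - (RtoC (b ^+ 2))%:P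
  = - ((RtoC (b ^+ 2))%:P * diag_eqn X).
  transitivity ((c * c * (P * P))%:P * (X * euler (euler X) - euler X * euler X)
      + (8%:R * RtoC eps * (P * P * P))%:P * (X * X * X) - (RtoC (b ^+ 2))%:P).
    by rewrite !polyCM; ring.
  by rewrite diag_dcoef_uprefactor // uprefactor_cube // polyCN polyCMn /diag_eqn; ring.
have b2_neq0 : RtoC (b ^+ 2) != 0.
  by rewrite -[RtoC _]/(real_complex _ _) (inj_eq (@complexI _)) sqrf_eq0.
by rewrite coefN coefCM => /esym/eqP; rewrite oppr_eq0 mulf_eq0 (negbTE b2_neq0) => /eqP.
Qed.

Lemma diag_sol_closed (C : numFieldType) (x : C) n : (0 < n)%N ->
  diag_sol (x / 6%:R) n = n%:R * x ^+ n / 6%:R ^+ n.-1.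
Proof.
case: n => [//|n] _; rewrite /diag_sol /= -mulr_natr expr_div_n !exprS.
by field; rewrite expf_neq0 // pnatr_eq0.
Qed.

Unset Implicit Arguments.
Set Strict Implicit.

Theorem mainTheorem6 (R : realType) (eps b : R) (acst kappa : R[i])
    (a : nat -> int -> R[i]) :
  (eps = 1 \/ eps = -1) ->
  b != 0 ->
  `|'Re kappa| < 1 / 2%:R ->
  a 1%N 0 = 0 ->
  a 1%N 1 * a 1%N (-1) = - 'i * kappa / (sqrtC (3%:R : R[i]) * (6.-root (RtoC (eps * b))) ^+ 2) ->
  tzero (dP3_formal eps b acst kappa (userie eps b a)) ->
  forall n : nat, (1 <= n)%N ->
    a n (- n%:Z) = n%:R * a 1%N (-1) ^+ n / 6%:R ^+ n.-1 /\
    a n n%:Z = n%:R * a 1%N 1 ^+ n / 6%:R ^+ n.-1.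
Proof.
move=> eps_pm1 b_neq0 _ _ _ eq0.
have diag_formula s n : (0 < n)%N ->
    a n (diag_index s n) = n%:R * a 1%N (diag_index s 1) ^+ n / 6%:R ^+ n.-1.
  move=> n_gt0; rewrite -diag_sol_closed //.
  have -> : a n (diag_index s n) = diag_coefs s a n.
    by rewrite /diag_coefs /ucoef abs_diag_index leqnn; case: n n_gt0.
  apply: diag_eqn_solution_unique.
  - by rewrite /diag_coefs /ucoef; case: s.
  - by [].
  - rewrite /diag_coefs /ucoef abs_diag_index /diag_sol /=.
    by rewrite mul1r expr1 -mulr_natr divfK // pnatr_eq0.
  - move=> N; exact: (diag_eqn_userie s eps_pm1 b_neq0 eq0).
  - move=> N; exact: diag_eqn_diag_sol.
by move=> n n_gt0; split; [exact: (diag_formula false) | exact: (diag_formula true)].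
Qed.
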